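(* Let $A,\tilde A$ be irrational numbers and $\tau,\tilde t\in\mathbb R$. If for all $m,n\in\mathbb Z$ $$An+\tau\le m\iff \tilde An+\tilde t\le m,$$ then $A=\tilde A$ and $\tau=\tilde t$. *)

From Stdlib Require Import Reals ZArith.
Open Scope R_scope.

Definition irrational (x : R) : Prop :=
  ~ exists (p q : Z), q <> 0%Z /\ x = IZR p / IZR q.

(** The translates [A n + tau] and [At n + tt] have the same ceiling for every
    integer [n], so they differ by at most 1; a bounded affine function of [n]
    is constant, whence [A = At].  Once the slopes agree, [tau <> tt] would give
    an element [m + n A] of the dense group [Z + Z A] strictly between [tau] and
    [tt], and the pair [(m, -n)] would separate the two conditions.  Density
    comes from producing arbitrarily small positive elements of [Z + Z A]. *)

From Stdlib Require Import Reals ZArith Lra Lia.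
Open Scope R_scope.

Lemma irrational_neq_IZR (x : R) (k : Z) : irrational x -> x <> IZR k.
Proof.
  intros Hx E; apply Hx; exists k, 1%Z; split; [lia|].
  rewrite E; simpl; field.
Qed.

Lemma irrational_affine (x : R) (a b : Z) :
  irrational x -> b <> 0%Z -> irrational (IZR a + IZR b * x).
Proof.
  intros Hx Hb [p [q [Hq E]]]; apply Hx.
  exists (p - a * q)%Z, (b * q)%Z; split; [lia|].
  assert (IZR b <> 0) by now apply not_0_IZR.
  assert (IZR q <> 0) by now apply not_0_IZR.
  assert (x = (IZR p / IZR q - IZR a) / IZR b) by (rewrite <- E; field; auto).
  subst x; rewrite minus_IZR, !mult_IZR; field; auto.
Qed.

(* With [k = floor (1/x)], the positive numbers [1 - k x] and [(k+1) x - 1]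
   add up to [x], so one of them is at most [x / 2]. *)
Lemma irrational_halving (x : R) : irrational x -> 0 < x < 1 ->
  exists a b : Z, b <> 0%Z /\ 0 < IZR a + IZR b * x <= x / 2.
Proof.
  intros Hx [Hx0 Hx1].
  destruct (archimed (/ x)) as [Hup1 Hup2].
  set (k := (up (/ x) - 1)%Z).
  assert (Hk : IZR k = IZR (up (/ x)) - 1) by (unfold k; rewrite minus_IZR; auto).
  assert (Hinv : x * / x = 1) by (field; lra).
  assert (1 < / x) by (rewrite <- Rinv_1; apply Rinv_lt_contravar; lra).
  assert (Hk1 : (1 <= k)%Z).
  { assert (1 < up (/ x))%Z by (apply lt_IZR; simpl; lra); unfold k; lia. }
  assert (Hlow : 0 <= 1 - IZR k * x).
  { assert (0 <= (/ x - IZR k) * x) by (apply Rmult_le_pos; lra); nra. }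
  assert (Hhigh : 0 < (IZR k + 1) * x - 1).
  { assert (0 < (IZR k + 1 - / x) * x) by (apply Rmult_lt_0_compat; lra); nra. }
  assert (Hne : 1 - IZR k * x <> 0).
  { replace (1 - IZR k * x) with (IZR 1 + IZR (- k) * x)
      by (rewrite opp_IZR; simpl; ring).
    apply irrational_neq_IZR, irrational_affine; auto; lia. }
  destruct (Rle_lt_dec (1 - IZR k * x) (x / 2)).
  - exists 1%Z, (- k)%Z; rewrite opp_IZR; split; [lia | simpl; lra].
  - exists (-1)%Z, (k + 1)%Z; rewrite plus_IZR; split; [lia | simpl; lra].
Qed.

Definition int_comb (A x : R) : Prop := exists p q : Z, x = IZR p + IZR q * A.

Lemma int_comb_affine (A x : R) (a b : Z) :
  int_comb A x -> int_comb A (IZR a + IZR b * x).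
Proof.
  intros [p [q ->]]; exists (a + b * p)%Z, (b * q)%Z.
  rewrite plus_IZR, !mult_IZR; ring.
Qed.

Lemma int_comb_pow_small (A : R) : irrational A -> forall N : nat,
  exists x, int_comb A x /\ irrational x /\ 0 < x < (/ 2) ^ N.
Proof.
  intros HA N; induction N as [|N [x [Hx [Hirr Hbound]]]].
  - destruct (archimed A) as [Hup1 Hup2].
    exists (IZR (1 - up A) + IZR 1 * A); split; [|split].
    + exists (1 - up A)%Z, 1%Z; reflexivity.
    + apply irrational_affine; auto; lia.
    + assert (A <> IZR (up A - 1)) by now apply irrational_neq_IZR.
      rewrite minus_IZR in *; simpl in *; lra.
  - assert ((/ 2) ^ N <= 1) by (rewrite <- (pow1 N); apply pow_incr; lra).
    destruct (irrational_halving x Hirr ltac:(lra)) as [a [b [Hb Hab]]].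
    exists (IZR a + IZR b * x); split; [|split].
    + now apply int_comb_affine.
    + now apply irrational_affine.
    + simpl; lra.
Qed.

Lemma int_comb_small (A eps : R) : irrational A -> 0 < eps ->
  exists x, int_comb A x /\ 0 < x < eps.
Proof.
  intros HA Heps.
  destruct (pow_lt_1_zero (/ 2) ltac:(rewrite Rabs_pos_eq; lra) eps Heps)
    as [N HN].
  destruct (int_comb_pow_small A HA N) as [x [Hx [_ Hbound]]].
  specialize (HN N (Nat.le_refl N)).
  rewrite Rabs_pos_eq in HN by (apply pow_le; lra).
  exists x; split; [auto | lra].
Qed.

Lemma int_comb_dense (A c d : R) : irrational A -> 0 < d ->
  exists m n : Z, c < IZR m + IZR n * A < c + d.
Proof.
  intros HA Hd.
  destruct (int_comb_small A d HA Hd) as [x [Hx [Hx0 Hxd]]].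
  destruct (archimed (c / x)) as [Hup1 Hup2].
  destruct (int_comb_affine A x 0 (up (c / x)) Hx) as [m [n Hmn]].
  exists m, n; rewrite <- Hmn.
  assert (c = c / x * x) by (field; lra).
  split; nra.
Qed.

Lemma int_upper_bounds_le (x y : R) :
  (forall m : Z, x <= IZR m -> y <= IZR m) -> y <= x + 1.
Proof.
  intros H; destruct (archimed x) as [Hup1 Hup2].
  assert (y <= IZR (up x)) by (apply H; lra); lra.
Qed.

Lemma bounded_on_Z_slope_eq0 (a b C : R) :
  (forall n : Z, Rabs (a * IZR n + b) <= C) -> a = 0.
Proof.
  intros H; destruct (Req_dec a 0) as [|Ha]; auto; exfalso.
  assert (HC : Rabs b <= C).
  { specialize (H 0%Z); rewrite Rmult_0_r, Rplus_0_l in H; exact H. }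
  assert (Hpos : 0 < Rabs a) by now apply Rabs_pos_lt.
  set (n := up ((C + Rabs b) / Rabs a)).
  destruct (archimed ((C + Rabs b) / Rabs a)) as [Hup _]; fold n in Hup.
  assert (Hn : C + Rabs b < Rabs a * IZR n).
  { replace (C + Rabs b) with ((C + Rabs b) / Rabs a * Rabs a) by (field; lra).
    nra. }
  assert (Hn0 : 0 <= IZR n) by (pose proof (Rabs_pos b); nra).
  pose proof (H n).
  pose proof (Rabs_triang (a * IZR n + b) (- b)).
  replace (a * IZR n + b + - b) with (a * IZR n) in * by ring.
  rewrite Rabs_Ropp, Rabs_mult, (Rabs_pos_eq (IZR n)) in * by auto; lra.
Qed.

Lemma offset_le_of_thresholds (A tau tt : R) : irrational A ->
  (forall m n : Z, A * IZR n + tau <= IZR m -> A * IZR n + tt <= IZR m) ->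
  tt <= tau.
Proof.
  intros HA H; destruct (Rle_lt_dec tt tau) as [|Hlt]; auto; exfalso.
  destruct (int_comb_dense A tau (tt - tau) HA ltac:(lra)) as [m [n Hmn]].
  assert (Hsep : A * IZR (- n) + tt <= IZR m) by (apply H; rewrite opp_IZR; lra).
  rewrite opp_IZR in Hsep; lra.
Qed.

Theorem proposition2 (A At tau tt : R) :
  irrational A -> irrational At ->
  (forall m n : Z, A * IZR n + tau <= IZR m <-> At * IZR n + tt <= IZR m) ->
  A = At /\ tau = tt.
Proof.
  intros HA _ H.
  assert (Hslope : At - A = 0).
  { apply (bounded_on_Z_slope_eq0 _ (tt - tau) 1); intros n.
    pose proof (int_upper_bounds_le _ _ (fun m => proj1 (H m n))).
    pose proof (int_upper_bounds_le _ _ (fun m => proj2 (H m n))).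
    apply Rabs_le; lra. }
  assert (A = At) by lra; subst At; split; auto.
  apply Rle_antisym; apply (offset_le_of_thresholds A); auto;
    intros m n; apply H.
Qed.
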